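(* Let $R$ be a finite commutative local ring and $G=\mathrm{GL}_n(R)$. For each $w\in W$, the map \[ \phi_w: e_{U^w}e_{V^w}\mathbb{C}[G]\to e_Ve_U\mathbb{C}[G],\qquad x\mapsto e_Vx, \] is a well-defined isomorphism of $\mathbb{C}[L]$-$\mathbb{C}[G]$ bimodules, where $U^w=w^{-1}Uw$, $V^w=w^{-1}Vw$.
   Context: $L$ is the subgroup of diagonal matrices, $U$ (resp. $V$) the subgroup of upper (resp. lower) unitriangular matrices, and $W$ the group of permutation matrices in $G$. For a subgroup $H\subseteq G$, $e_H=|H|^{-1}\sum_{h\in H}h\in\mathbb{C}[G]$. Since $L$ normalises $U,V,U^w,V^w$, the corresponding idempotents commute with $\mathbb{C}[L]$, so both spaces are $\mathbb{C}[L]$-$\mathbb{C}[G]$ bimodules under left and right multiplication. *)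

From HB Require Import structures.
From mathcomp Require Import all_boot all_order all_algebra all_fingroup all_field.
Set Implicit Arguments. Unset Strict Implicit. Unset Printing Implicit Defensive.
Import GRing.Theory Num.Theory.
Local Open Scope ring_scope.

(* A commutative ring R (nonzero, as MathComp rings are) is local iff its
   non-units are closed under addition (equivalently: it has a unique maximal
   ideal, namely the set of non-units). *)
Definition local_ring (R : comUnitRingType) : Prop :=
  forall x y : R, x \notin GRing.unit -> y \notin GRing.unit ->
    x + y \notin GRing.unit.

Notation galg gT := {ffun gT -> algC} (only parsing).

Definition gmul (gT : finGroupType) (a b : galg gT) : galg gT :=
  [ffun g => \sum_(h : gT) a h * b (h^-1 * g)%g].

Definition gdelta (gT : finGroupType) (g : gT) : galg gT :=
  [ffun x => (x == g)%:R].

Definition gscale (gT : finGroupType) (c : algC) (a : galg gT) : galg gT :=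
  [ffun g => c * a g].

Definition eH (gT : finGroupType) (H : {set gT}) : galg gT :=
  gscale (#|H|%:R)^-1 (\sum_(h in H) gdelta h).

Definition in_lideal (gT : finGroupType) (a x : galg gT) : Prop :=
  exists y, x = gmul a y.

(* elements of C[H] seen inside C[G]: supported on H *)
Definition supported_on (gT : finGroupType) (H : {set gT}) (a : galg gT) : Prop :=
  forall g, g \notin H -> a g = 0.

Section Subgroups.
Variables (n : nat) (R : finComUnitRingType).
Local Notation G := {'GL_n.+1[R]}.

Definition diagL : {set G} := [set g : G | is_diag_mx (GLval g)].
Definition upperU : {set G} :=
  [set g : G | [forall i : 'I_n.+1, forall j : 'I_n.+1,
     (GLval g i j == ((i == j)%:R : R)) || (i < j)%N]].
Definition lowerV : {set G} :=
  [set g : G | [forall i : 'I_n.+1, forall j : 'I_n.+1,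
     (GLval g i j == ((i == j)%:R : R)) || (j < i)%N]].
Definition permW : {set G} := [set g : G | is_perm_mx (GLval g)].
End Subgroups.

From HB Require Import structures.
From mathcomp Require Import all_boot all_order all_algebra all_fingroup all_field.
From mathcomp Require Import ring.
Set Implicit Arguments. Unset Strict Implicit. Unset Printing Implicit Defensive.
Import GRing.Theory Num.Theory.
Local Open Scope ring_scope.

(* Both U and V factor as products of their intersections with U^w and V^w, and
   symmetrically U^w and V^w factor through U and V: writing all four as pattern
   groups of unitriangular matrices, this follows by counting entries.  Since
   e_H e_K = e_{HK} for subgroups, these factorisations give
   e_V e_{U^w} e_{V^w} = e_V e_U e_{V^w ∩ V}, so x |-> e_V x maps the domain into
   the codomain.  If e_V e_{U^w} e_{V^w} b = 0, the same identities give
   e_{V^w} e_{U^w} e_{V^w} b = 0, hence (e_{U^w} e_{V^w} b)^* (e_{U^w} e_{V^w} b) = 0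
   and e_{U^w} e_{V^w} b = 0 by positivity of the trace form.  For surjectivity,
   a C[G] = a a^* C[G] for every a (the ranks of a and a a^* agree), so
   e_V e_U C[G] = e_V e_U e_V C[G] = e_V e_{U^w} e_{V^w} e_{U^w ∩ V} C[G], using
   e_V = e_{V^w ∩ V} e_{U^w ∩ V}.  The bimodule properties come from
   associativity and from L normalising V. *)

Section GroupAlgebra.
Variable gT : finGroupType.
Local Notation A := {ffun gT -> algC}.
(* [algC] is not a vector space over itself: its regular module [algC^o] is. *)
Local Notation Ao := {ffun gT -> algC^o}.
Implicit Types a b c x y : A.

Lemma gscaleE (k : algC) a : gscale k a = k *: (a : Ao).
Proof. by apply/ffunP=> g; rewrite !ffunE. Qed.

Fact gmul_is_semilinear a : semilinear (gmul a : Ao -> Ao).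
Proof.
split=> [k x|x y]; apply/ffunP=> g; rewrite !ffunE.
  by rewrite scaler_sumr; apply: eq_bigr => h _; rewrite ffunE scalerAr.
by rewrite -big_split; apply: eq_bigr => h _; rewrite ffunE mulrDr.
Qed.
HB.instance Definition _ a :=
  GRing.isSemilinear.Build algC Ao Ao _ (gmul a : Ao -> Ao) (gmul_is_semilinear a).

Lemma gmulA a b c : gmul (gmul a b) c = gmul a (gmul b c).
Proof.
apply/ffunP=> g; rewrite !ffunE.
under eq_bigr do rewrite ffunE big_distrl /=.
rewrite exchange_big /=; apply: eq_bigr => k _.
rewrite ffunE big_distrr /= (reindex_inj (mulgI k)) /=.
by apply: eq_bigr => h _; rewrite mulrA mulKg invMg -mulgA.
Qed.

Lemma gmulr1 a : gmul a (gdelta 1%g) = a.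
Proof.
apply/ffunP=> g; rewrite ffunE (bigD1 g) //= big1 => [|h ne_hg]; last first.
  by rewrite ffunE -eq_mulVg1 (negPf ne_hg) mulr0.
by rewrite ffunE mulVg eqxx mulr1 addr0.
Qed.

Lemma eHE (H : {set gT}) g : eH H g = if g \in H then (#|H|%:R)^-1 else 0.
Proof.
rewrite /eH ffunE sum_ffunE.
under eq_bigr do rewrite ffunE.
case: ifP => Hg; last first.
  by rewrite big1 ?mulr0 // => h; case: eqP => [<-|//]; rewrite Hg.
rewrite (bigD1 g) //= eqxx big1 ?addr0 ?mulr1 // => h /andP[_ /negPf ne_hg].
by rewrite eq_sym ne_hg.
Qed.

Lemma eH_mul (H K : {group gT}) : gmul (eH H) (eH K) = eH (H * K)%g.
Proof.
apply/ffunP=> g; rewrite ffunE eHE.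
under eq_bigr do rewrite !eHE.
have cardG_neq0 (M : {group gT}) : (#|M|%:R : algC) != 0.
  by rewrite pnatr_eq0 -lt0n cardG_gt0.
case: (boolP (g \in H * K)%g) => [/mulsgP[h k Hh Kk ->] | HKg]; last first.
  rewrite big1 // => x _; case: ifP => Hx; case: ifP => Kx; rewrite ?mulr0 ?mul0r //.
  by case/negP: HKg; rewrite -(mulKVg x g); apply: mem_mulg.
(* substituting [x := h * u], the summand is nonzero exactly for [u \in H :&: K] *)
rewrite (reindex_inj (mulgI h)) /=.
under eq_bigr => u _ do rewrite groupMl // invMg -!mulgA mulKg groupMr // groupV.
pose c : algC := (#|H|%:R)^-1 * (#|K|%:R)^-1.
rewrite (eq_bigr (fun u : gT => if u \in H :&: K then c else 0)); last first.
  by move=> u _; rewrite inE; case: (u \in H); case: (u \in K); rewrite ?mulr0 ?mul0r.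
rewrite -big_mkcond /= sumr_const -[_ *+ _]mulr_natr.
have := mul_cardG H K; move/(congr1 (fun m => m%:R : algC)); rewrite !natrM => cardHK.
rewrite (_ : #|(H * K)%g|%:R = #|H|%:R * #|K|%:R / #|H :&: K|%:R).
  by rewrite /c; field; rewrite !cardG_neq0.
by rewrite cardHK mulfK.
Qed.

Lemma eH_mulGSr (H K : {group gT}) y :
  K \subset H -> gmul (eH H) (gmul (eH K) y) = gmul (eH H) y.
Proof. by move=> sKH; rewrite -gmulA eH_mul mulGSid. Qed.

Lemma eH_mulSGr (H K : {group gT}) y :
  K \subset H -> gmul (eH K) (gmul (eH H) y) = gmul (eH H) y.
Proof. by move=> sKH; rewrite -gmulA eH_mul mulSGid. Qed.

Lemma eH_idr (H : {group gT}) y : gmul (eH H) (gmul (eH H) y) = gmul (eH H) y.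
Proof. exact: eH_mulGSr. Qed.

Lemma eH_comm_supported (H : {group gT}) (D : {set gT}) a :
  D \subset 'N(H)%g -> supported_on D a -> gmul (eH H) a = gmul a (eH H).
Proof.
move=> nHD Da; apply/ffunP => g; rewrite !ffunE.
rewrite (reindex_inj (inj_comp (mulgI g) (@invg_inj gT))) /=.
apply: eq_bigr => k _; rewrite invMg invgK -mulgA mulVg mulg1.
have [Dk|D'k] := boolP (k \in D); last by rewrite Da // mulr0 mul0r.
have memJH (u : gT) : ((u ^ k)%g \in H) = (u \in H).
  by rewrite -{1}(normP (subsetP nHD k Dk)) memJ_conjg.
have -> : (k^-1 * g)%g = ((g * k^-1) ^ k)%g by rewrite conjgE mulgKV.
by rewrite mulrC !eHE memJH.
Qed.

Definition adj a : A := [ffun g => (a (g^-1)%g)^*].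

Lemma adjK : involutive adj.
Proof. by move=> a; apply/ffunP=> g; rewrite !ffunE invgK conjCK. Qed.

Lemma adj_mul a b : adj (gmul a b) = gmul (adj b) (adj a).
Proof.
apply/ffunP=> g; rewrite !ffunE rmorph_sum /= (reindex_inj (mulgI (g^-1)%g)) /=.
apply: eq_bigr => h _; rewrite !ffunE rmorphM mulrC /=.
by rewrite !invMg !invgK mulgK.
Qed.

Lemma adj_eH (H : {group gT}) : adj (eH H) = eH H.
Proof.
apply/ffunP=> g; rewrite ffunE !eHE groupV.
by case: ifP => _; rewrite ?rmorph0 // fmorphV rmorph_nat.
Qed.

(* The coefficient of 1 in [adj a * a] is the sum of the [`|a g| ^+ 2]. *)
Lemma adj_mul_eq0 a : gmul (adj a) a = 0 -> a = 0.
Proof.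
move=> /(congr1 (fun f : A => f 1%g)); rewrite !ffunE => sum_eq0.
have norm_eq0 g : (a g^-1%g)^* * a g^-1%g = 0.
  apply: (@psumr_eq0P _ _ predT (fun h => (a h^-1%g)^* * a h^-1%g)) => // [h _|].
    by rewrite mulrC mul_conjC_ge0.
  by rewrite -[RHS]sum_eq0; apply: eq_bigr => h _; rewrite ffunE mulg1.
apply/ffunP=> g; rewrite ffunE; apply/eqP.
by rewrite -mul_conjC_eq0 mulrC -[g]invgK norm_eq0.
Qed.

Definition gmulf a : 'End(Ao) := linfun (gmul a : Ao -> Ao).

Lemma gmulfE a x : gmulf a x = gmul a x.
Proof. by rewrite lfunE. Qed.

Lemma lker_gmul_adj a : lker (gmulf (gmul (adj a) a)) = lker (gmulf a).
Proof.
apply/vspaceP => x; rewrite !memv_ker !gmulfE gmulA.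
apply/eqP/eqP => [aax0|->]; last exact: linear0.
by apply: adj_mul_eq0; rewrite adj_mul gmulA aax0 linear0.
Qed.

Lemma dim_limg_gmul_adj a :
  \dim (limg (gmulf (gmul (adj a) a))) = \dim (limg (gmulf a)).
Proof.
have := limg_ker_dim (gmulf (gmul (adj a) a)) fullv.
rewrite lker_gmul_adj -(limg_ker_dim (gmulf a) fullv).
by move/eqP; rewrite eqn_add2l => /eqP.
Qed.

Lemma limg_gmulS a b : (limg (gmulf (gmul a b)) <= limg (gmulf a))%VS.
Proof.
apply/subvP => _ /memv_imgP[x _ ->].
by rewrite gmulfE gmulA -gmulfE memv_img ?memvf.
Qed.

(* rank a = rank (adj a * a) <= rank (adj a) = rank (a * adj a) <= rank a *)
Lemma limg_gmul_adj a : limg (gmulf (gmul a (adj a))) = limg (gmulf a).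
Proof.
apply/eqP; rewrite eqEdim limg_gmulS /=.
have := dim_limg_gmul_adj (adj a); rewrite adjK => ->.
by rewrite -dim_limg_gmul_adj dimvS ?limg_gmulS.
Qed.

Lemma in_lideal_mul_adj x : in_lideal (gmul x (adj x)) x.
Proof.
have : (x : Ao) \in limg (gmulf x).
  by rewrite -{1}(gmulr1 x) -gmulfE memv_img ?memvf.
by rewrite -limg_gmul_adj => /memv_imgP[y _ x_eq]; exists y; rewrite {1}x_eq gmulfE.
Qed.

End GroupAlgebra.

Definition factorises (gT : finGroupType) (X Y Z : {set gT}) : Prop :=
  X = ((X :&: Y) * (X :&: Z))%g.

Lemma factorisesC (gT : finGroupType) (X Y Z : {group gT}) :
  factorises X Y Z -> factorises X Z Y.
Proof. by rewrite /factorises => defX; rewrite -invMG -defX invGid. Qed.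

Lemma factorises_conj (gT : finGroupType) (X Y Z : {set gT}) x :
  factorises X Y Z -> factorises (X :^ x)%g (Y :^ x)%g (Z :^ x)%g.
Proof. by rewrite /factorises => defX; rewrite -!conjIg -conjsMg -defX. Qed.

Section TransferIsomorphism.
Variables (gT : finGroupType) (U V U' V' : {group gT}).
Hypotheses (factU : factorises U U' V') (factV : factorises V U' V').
Hypotheses (factU' : factorises U' U V) (factV' : factorises V' U V).

Local Notation E := (eH V).
Local Notation F := (eH U).
Local Notation P := (eH U').
Local Notation Q := (eH V').
Local Notation E1 := (eH (V' :&: V)).
Local Notation E2 := (eH (U' :&: V)).

Lemma eHV_split : E = gmul E1 E2.
Proof. by rewrite [V' :&: V]setIC [U' :&: V]setIC eH_mul -(factorisesC factV). Qed.

Lemma eHV_mulPQ y : gmul E (gmul P (gmul Q y)) = gmul E (gmul F (gmul E1 y)).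
Proof.
have defP : P = gmul (eH (U' :&: V)) (eH (U' :&: U)).
  by rewrite eH_mul -(factorisesC factU').
have defQ : Q = gmul (eH (V' :&: U)) E1 by rewrite eH_mul -factV'.
have defF : F = gmul (eH (U' :&: U)) (eH (V' :&: U)).
  by rewrite [U' :&: U]setIC [V' :&: U]setIC eH_mul -factU.
by rewrite defP defQ defF !gmulA eH_mulGSr ?subsetIr.
Qed.

Lemma lideal_eHV x : in_lideal (gmul P Q) x -> in_lideal (gmul E F) (gmul E x).
Proof. by case=> y ->; exists (gmul E1 y); rewrite !gmulA eHV_mulPQ. Qed.

Lemma lideal_eHV_inj x x' : in_lideal (gmul P Q) x -> in_lideal (gmul P Q) x' ->
  gmul E x = gmul E x' -> x = x'.
Proof.
case=> y -> [y' ->] /eqP; rewrite -subr_eq0 -!linearB /=; set b := y - y'.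
rewrite gmulA => /eqP EPQb.
apply/eqP; rewrite -subr_eq0 -linearB /= -/b; apply/eqP.
have E1PQb : gmul E1 (gmul P (gmul Q b)) = 0.
  by rewrite -(eH_mulSGr _ (subsetIl U' V)) -gmulA /= -eHV_split.
have QPQb : gmul Q (gmul P (gmul Q b)) = 0.
  by rewrite -(eH_mulGSr _ (subsetIl V' V)) /= E1PQb linear0.
apply: adj_mul_eq0; rewrite !adj_mul !adj_eH !gmulA eH_idr QPQb.
exact: linear0.
Qed.

Lemma lideal_eHV_surj z : in_lideal (gmul E F) z ->
  exists2 x, in_lideal (gmul P Q) x & gmul E x = z.
Proof.
case=> y ->; have [c defEF] := in_lideal_mul_adj (gmul E F).
rewrite adj_mul !adj_eH in defEF.
exists (gmul (gmul P Q) (gmul E2 (gmul c y))); first by eexists.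
rewrite defEF !gmulA eHV_mulPQ eH_idr.
by rewrite -[gmul E1 (gmul E2 _)]gmulA -eHV_split.
Qed.

End TransferIsomorphism.

Section PatternGroups.
Variables (n : nat) (R : finComUnitRingType).
Local Notation G := {'GL_n.+1[R]}.
Local Notation I := 'I_n.+1.
Implicit Types (r : rel I) (g : G).

Definition patternG r : {set G} :=
  [set g : G | [forall i, forall j, (GLval g i j == (i == j)%:R) || r i j]].

Definition trig_rel r :=
  (forall i j, r i j -> (i < j)%N) \/ (forall i j, r i j -> (j < i)%N).

Lemma patternGP r g :
  reflect (forall i j, (GLval g i j == (i == j)%:R) || r i j) (g \in patternG r).
Proof.
rewrite inE; apply: (iffP forallP) => [gr i j | gr i].
  exact: (forallP (gr i)).
exact/forallP/gr.
Qed.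

Lemma patternGI r r' :
  patternG r :&: patternG r' = patternG [rel i j | r i j && r' i j].
Proof.
apply/setP => g; rewrite inE.
apply/andP/patternGP => [[/patternGP gr /patternGP gr'] i j | grr'].
  by rewrite orb_andr gr gr'.
by split; apply/patternGP => i j; move: (grr' i j); rewrite orb_andr => /andP[].
Qed.

Lemma patternGS r r' : subrel r r' -> patternG r \subset patternG r'.
Proof.
move=> srr'; apply/subsetP => g /patternGP gr; apply/patternGP => i j.
by case/orP: (gr i j) => [->|/srr' ->]; rewrite ?orbT.
Qed.

Lemma patternG1 r : (forall i j, ~~ r i j) -> patternG r = 1%g.
Proof.
move=> r0; apply/setP => g; rewrite set1gE in_set1.
apply/patternGP/eqP => [gr | -> i j]; last by rewrite GL_1E mxE eqxx.
apply: val_inj; change (GLval g = GLval 1%g); apply/matrixP => i j.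
by move: (gr i j); rewrite (negPf (r0 i j)) orbF GL_1E mxE => /eqP.
Qed.

Lemma trig_rel_irr r : trig_rel r -> irreflexive r.
Proof. by move=> trig_r i; apply/negP => /[dup]; case: trig_r => h /h; rewrite ltnn. Qed.

(* For [~~ r i j], transitivity of [r] kills every term of [sum_k x i k * y k j]
   except [k = i = j]. *)
Lemma patternG_group r : irreflexive r -> transitive r -> group_set (patternG r).
Proof.
move=> irr_r tr_r; apply/group_setP; split.
  by apply/patternGP => i j; rewrite GL_1E !mxE eqxx.
move=> x y /patternGP xr /patternGP yr; apply/patternGP => i j.
case rij: (r i j); first by rewrite orbT.
rewrite orbF GL_MxE.
have term_eq k : GLval x i k * GLval y k j = (i == k)%:R * (k == j)%:R :> R.
  move: (xr i k) (yr k j).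
  case rik: (r i k); case rkj: (r k j); rewrite ?orbT ?orbF.
  - by rewrite (tr_r _ _ _ rik rkj) in rij.
  - move=> _ /eqP ->; case: eqP => [ekj|]; last by rewrite !mulr0.
    by rewrite -ekj rik in rij.
  - move=> /eqP -> _; case: eqP => [eik|]; last by rewrite !mul0r.
    by rewrite eik rkj in rij.
  - by move=> /eqP -> /eqP ->.
have -> : (GLval x *m GLval y) i j = ((1%:M : 'M[R]_n.+1) *m 1%:M) i j.
  by rewrite !mxE; apply: eq_bigr => k _; rewrite term_eq !mxE.
by rewrite mul1mx mxE.
Qed.

Lemma det_pattern r (M : 'M[R]_n.+1) : trig_rel r ->
  (forall i j, (M i j == (i == j)%:R) || r i j) -> \det M = 1.
Proof.
move=> trig_r Mr.
have Moff i j : ~~ r i j -> M i j = (i == j)%:R.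
  by move=> nrij; move: (Mr i j); rewrite (negPf nrij) orbF => /eqP.
have Mii i : M i i = 1 by rewrite Moff ?eqxx ?trig_rel_irr.
have M0 i j : i != j -> ~~ r i j -> M i j = 0.
  by move=> /negPf neq_ij /Moff ->; rewrite neq_ij.
have neq_lt (i j : I) : (i < j)%N -> i != j.
  by move=> lt_ij; apply/eqP => eq_ij; rewrite eq_ij ltnn in lt_ij.
have det_lower_trig (N : 'M[R]_n.+1) : (forall i j : I, (i < j)%N -> N i j = 0) ->
    (forall i, N i i = 1) -> \det N = 1.
  move=> N0 N1; rewrite det_trig; last first.
    by apply/forallP => i; apply/forallP => j; apply/implyP => /N0 ->.
  by rewrite big1 // => i _; rewrite N1.
case: trig_r => r_trig.
  rewrite -det_tr; apply: det_lower_trig => [i j lt_ij | i]; rewrite mxE //.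
  apply: M0; first by rewrite eq_sym neq_lt.
  by apply/negP => /r_trig; rewrite ltnNge (ltnW lt_ij).
apply: det_lower_trig => // i j lt_ij; apply: M0; first exact: neq_lt.
by apply/negP => /r_trig; rewrite ltnNge (ltnW lt_ij).
Qed.

Lemma card_patternG r : trig_rel r ->
  #|patternG r| = (#|R| ^ #|[set p : I * I | r p.1 p.2]|)%N.
Proof.
move=> trig_r.
pose offdiag g := [ffun p : I * I => GLval g p.1 p.2 - (p.1 == p.2)%:R].
have offdiag_inj : injective offdiag.
  move=> g g' /ffunP eq_gg'; apply/val_inj/matrixP => i j.
  by move: (eq_gg' (i, j)); rewrite !ffunE => /addIr.
rewrite -(card_pffun_on 0) -(card_imset _ offdiag_inj); apply: eq_card => f.
apply/imsetP/pffun_onP => [[g /patternGP gr ->] | [/supportP f0 _]].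
  split=> //; apply/supportP => -[i j]; rewrite inE ffunE /= => nrij.
  by move: (gr i j); rewrite (negPf nrij) orbF => /eqP ->; rewrite subrr.
pose M := \matrix_(i, j) ((i == j)%:R + f (i, j)).
have Mr i j : (M i j == (i == j)%:R) || r i j.
  by case rij: (r i j); rewrite ?orbT // orbF mxE f0 ?addr0 // inE rij.
have M_unit : M \in unitmx by rewrite unitmxE (det_pattern trig_r Mr) unitr1.
exists (Sub M M_unit : G); first exact/patternGP.
by apply/ffunP => -[i j]; rewrite ffunE /= mxE addrC addKr.
Qed.

Lemma patternG_factor r (p : I -> I) : trig_rel r -> transitive r -> injective p ->
  patternG r = (patternG [rel i j | r i j && (p i < p j)%N]
                * patternG [rel i j | r i j && (p j < p i)%N])%g.
Proof.
move=> trig_r tr_r inj_p; have irr_r := trig_rel_irr trig_r.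
set r1 := [rel i j | _ && (p i < p j)%N]; set r2 := [rel i j | _ && (p j < p i)%N].
have trig_sub q : subrel q r -> trig_rel q.
  by move=> sqr; case: trig_r => r_trig; [left | right] => i j /sqr /r_trig.
have r1_group : group_set (patternG r1).
  apply: patternG_group => [i | j i k /andP[rij pij] /andP[rjk pjk]] /=.
    by rewrite irr_r.
  by rewrite (tr_r _ _ _ rij rjk) (ltn_trans pij pjk).
have r2_group : group_set (patternG r2).
  apply: patternG_group => [i | j i k /andP[rij pij] /andP[rjk pjk]] /=.
    by rewrite irr_r.
  by rewrite (tr_r _ _ _ rij rjk) (ltn_trans pjk pij).
have r1r2_TI : patternG r1 :&: patternG r2 = 1%g.
  rewrite patternGI patternG1 // => i j.
  apply/negP => /andP[/andP[_ lt_ij] /andP[_ lt_ji]].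
  by have := ltn_trans lt_ij lt_ji; rewrite ltnn.
have card_r : #|[set q : I * I | r q.1 q.2]| =
    (#|[set q : I * I | r1 q.1 q.2]| + #|[set q : I * I | r2 q.1 q.2]|)%N.
  rewrite -(cardsID [set q : I * I | (p q.1 < p q.2)%N]); congr (_ + _)%N.
    by apply: eq_card => q; rewrite !inE andbC.
  apply: eq_card => -[i j]; rewrite !inE /= -leqNgt leq_eqVlt andbC.
  case: (boolP (r i j)) => // rij; rewrite val_eqE (inj_eq inj_p).
  by case: eqP rij => // ->; rewrite irr_r.
apply/eqP; rewrite eq_sym eqEcard; apply/andP; split.
  apply: (mul_subG (G := Group (patternG_group irr_r tr_r))).
    by apply: patternGS => i j /andP[].
  by apply: patternGS => i j /andP[].
rewrite (TI_cardMg (G := Group r1_group) (H := Group r2_group) r1r2_TI) /=.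
have [trig_r1 trig_r2] : trig_rel r1 /\ trig_rel r2.
  by split; apply: trig_sub => i j /andP[].
by rewrite !card_patternG // -expnD -card_r.
Qed.

Lemma GLval_inv_perm (w : G) (s : 'S_n.+1) :
  GLval w = perm_mx s -> GLval w^-1 = perm_mx s^-1.
Proof.
move=> ws; rewrite GL_VE; apply: (mulrI (GL_unit w)); rewrite divrr ?GL_unit //.
by rewrite ws -[_ * _]/(_ *m _) -perm_mxM mulgV perm_mx1.
Qed.

Lemma patternG_conj_perm r (w : G) (s : 'S_n.+1) : GLval w = perm_mx s ->
  (patternG r :^ w)%g = patternG [rel i j | r (s^-1 i)%g (s^-1 j)%g].
Proof.
move=> ws; apply/setP => g; rewrite mem_conjg.
have conj_entry i j : GLval (g ^ w^-1)%g i j = GLval g (s i) (s j).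
  rewrite /conjg invgK !GL_MxE (GLval_inv_perm ws) ws.
  by rewrite -row_permE -col_permE !mxE.
apply/patternGP/patternGP => gr i j.
  have := gr (s^-1 i)%g (s^-1 j)%g.
  by rewrite conj_entry !permKV (inj_eq (@perm_inj _ s^-1)).
by have := gr (s i) (s j); rewrite /= conj_entry !permK (inj_eq (@perm_inj _ s)).
Qed.

Lemma diag_GL_unit (k : G) (d : 'rV[R]_n.+1) i :
  GLval k = diag_mx d -> d 0 i \is a GRing.unit.
Proof.
move=> kd; apply/unitrPr; exists (GLval k^-1 i i).
have := congr1 (fun M : 'M[R]_n.+1 => M i i) (congr1 GLval (mulgV k)).
by rewrite GL_MxE kd mul_diag_mx GL_1E !mxE eqxx.
Qed.

Lemma patternG_conj_diag r (k : G) :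
  k \in diagL n R -> (patternG r :^ k)%g = patternG r.
Proof.
rewrite inE => /diag_mxP[d kd]; apply/eqP; rewrite eq_sym eqEcard cardJg leqnn andbT.
apply/subsetP => g /patternGP gr; rewrite mem_conjg; set z := (g ^ k^-1)%g.
have entry i j : GLval z i j * d 0 j = d 0 i * GLval g i j.
  have zk_kg : (z * k = k * g)%g by rewrite /z conjgE invgK -!mulgA mulVg mulg1.
  have := congr1 (fun M : 'M[R]_n.+1 => M i j) (congr1 GLval zk_kg).
  by rewrite !GL_MxE kd mul_diag_mx mul_mx_diag !mxE.
apply/patternGP => i j; case/orP: (gr i j) => [/eqP gij | ->]; last by rewrite orbT.
apply/orP; left; apply/eqP; move: (entry i j); rewrite gij.
case: eqP => [<- | _]; rewrite ?mulr1 ?mulr0.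
  by rewrite -{2}[d 0 i]mul1r => /(mulIr (diag_GL_unit i kd)).
by rewrite -(mul0r (d 0 j)) => /(mulIr (diag_GL_unit j kd)).
Qed.

End PatternGroups.
Arguments patternG {n R} r.

Section UnitriangularGroups.
Variables (n : nat) (R : finComUnitRingType).
Local Notation G := {'GL_n.+1[R]}.
Local Notation I := 'I_n.+1.

Lemma upperUE : upperU n R = patternG [rel i j : I | (i < j)%N].
Proof. by []. Qed.

Lemma lowerVE : lowerV n R = patternG [rel i j : I | (j < i)%N].
Proof. by []. Qed.

Lemma upper_trig : trig_rel [rel i j : I | (i < j)%N].
Proof. by left. Qed.

Lemma lower_trig : trig_rel [rel i j : I | (j < i)%N].
Proof. by right. Qed.

Lemma upper_trans : transitive [rel i j : I | (i < j)%N].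
Proof. by move=> j i k /=; apply: ltn_trans. Qed.

Lemma lower_trans : transitive [rel i j : I | (j < i)%N].
Proof. by move=> j i k /= lt_ji lt_kj; apply: ltn_trans lt_kj lt_ji. Qed.

Lemma upperU_group_set : group_set (upperU n R).
Proof. exact: patternG_group (trig_rel_irr upper_trig) upper_trans. Qed.
Canonical upperU_group := Group upperU_group_set.

Lemma lowerV_group_set : group_set (lowerV n R).
Proof. exact: patternG_group (trig_rel_irr lower_trig) lower_trans. Qed.
Canonical lowerV_group := Group lowerV_group_set.

Lemma permW_invg (w : G) : w \in permW n R -> w^-1%g \in permW n R.
Proof.
rewrite !inE => /is_perm_mxP[s ws]; apply/is_perm_mxP.
by exists s^-1%g; apply: GLval_inv_perm.
Qed.

Lemma permW_factorises r (w : G) :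
  trig_rel r -> transitive r -> w \in permW n R ->
  factorises (patternG r) (upperU n R :^ w)%g (lowerV n R :^ w)%g.
Proof.
move=> trig_r tr_r; rewrite inE => /is_perm_mxP[s ws].
rewrite /factorises upperUE lowerVE !(patternG_conj_perm _ ws) !patternGI.
exact: patternG_factor trig_r tr_r (@perm_inj _ s^-1%g).
Qed.

Lemma permW_factorises_conj r (w : G) :
  trig_rel r -> transitive r -> w \in permW n R ->
  factorises (patternG r :^ w)%g (upperU n R) (lowerV n R).
Proof.
move=> trig_r tr_r /permW_invg Ww'.
by have := factorises_conj w (permW_factorises trig_r tr_r Ww'); rewrite !conjsgKV.
Qed.

Lemma diagL_norm_lowerV : diagL n R \subset 'N(lowerV n R)%g.
Proof. by apply/subsetP => k Lk; apply/normP; rewrite lowerVE patternG_conj_diag. Qed.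

End UnitriangularGroups.

Theorem lemma3p5 (R : finComUnitRingType) (n : nat) (hloc : local_ring R)
  (w : {'GL_n.+1[R]}) (hw : w \in permW n R) :
  let U := upperU n R in
  let V := lowerV n R in
  let Uw := (U :^ w)%g in   (* w^-1 U w *)
  let Vw := (V :^ w)%g in   (* w^-1 V w *)
  let dom := in_lideal (gmul (eH Uw) (eH Vw)) in
  let cod := in_lideal (gmul (eH V) (eH U)) in
  let phi := gmul (eH V) in
  (* well-defined *)
  (forall x, dom x -> cod (phi x)) /\
  (* injective on the domain *)
  (forall x y, dom x -> dom y -> phi x = phi y -> x = y) /\
  (* surjective onto the codomain *)
  (forall z, cod z -> exists2 x, dom x & phi x = z) /\
  (* C-linear *)
  (forall (c : algC) x y, dom x -> dom y -> phi (gscale c x + y) = gscale c (phi x) + phi y) /\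
  (* left C[L]-linear *)
  (forall a x, supported_on (diagL n R) a -> dom x ->
     phi (gmul a x) = gmul a (phi x)) /\
  (* right C[G]-linear *)
  (forall x b, dom x -> phi (gmul x b) = gmul (phi x) b).
Proof.
move=> U V Uw Vw dom cod phi.
have factU : factorises U Uw Vw := permW_factorises (upper_trig n) (@upper_trans n) hw.
have factV : factorises V Uw Vw := permW_factorises (lower_trig n) (@lower_trans n) hw.
have factUw : factorises Uw U V := permW_factorises_conj (upper_trig n) (@upper_trans n) hw.
have factVw : factorises Vw U V := permW_factorises_conj (lower_trig n) (@lower_trans n) hw.
split; first by move=> x; apply: lideal_eHV.
split; first by move=> x y; apply: lideal_eHV_inj.
split; first by move=> z; apply: lideal_eHV_surj.
split; first by move=> c x y _ _; rewrite /phi !gscaleE linearP.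
split.
  move=> a x La _.
  by rewrite /phi -gmulA (eH_comm_supported (diagL_norm_lowerV n R) La) gmulA.
by move=> x b _; rewrite /phi gmulA.
Qed.
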